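(* Let $F \in S_d$ and let $\mathbb{X} \subset \mathbb{P}^n$ be a finite set of distinct points with $I_{\mathbb{X}} \subseteq F^\perp$. Let $I \subset T$ be any homogeneous ideal generated in degree $e>0$ and let $t \in I_e$. If $t$ is not a zero divisor in $T/(I_{\mathbb{X}} : I)$, then for all sufficiently large integers $s$ \[ e \cdot |\mathbb{X}| \;\geq\; \sum_{i=0}^s HF\big(T/((I_{\mathbb{X}} : I)+(t)),\, i\big) \;\geq\; \sum_{i=0}^{s} HF\big(T/((F^\perp : I)+( t) ),\, i\big). \]
   Context: $k$ is an algebraically closed field of characteristic zero, $S=k[x_0,\ldots,x_n]$ and $T=k[X_0,\ldots,X_n]$ (standard graded, $n\ge 1$), and $T$ acts on $S$ by differentiation: $X_i\circ F=\partial F/\partial x_i$, extended linearly. For a form $F\in S$, $F^\perp=\{g\in T : g\circ F=0\}$. For a homogeneous ideal $J\subseteq T$, $HF(T/J,i)=\dim_k T_i-\dim_k J_i$. $I_{\mathbb{X}}\subseteq T$ denotes the homogeneous ideal of the point set $\mathbb{X}$, and $J:I=\{g\in T: gI\subseteq J\}$. *)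

From HB Require Import structures.
From mathcomp Require Import all_boot all_order all_algebra.
From mathcomp Require Import mpoly.
From Stdlib Require Import ClassicalEpsilon.

Set Implicit Arguments.
Unset Strict Implicit.
Unset Printing Implicit Defensive.

Import GRing.Theory.
Local Open Scope ring_scope.

Definition pbool (P : Prop) : bool :=
  if excluded_middle_informative P then true else false.

Section Apolarity.
Variables (k : fieldType) (n : nat).

(* S = T = k[x_0..x_n] : polynomials in n+1 variables. *)
Local Notation poly := {mpoly k[n.+1]}.

Definition pset := poly -> Prop.

(* Action of T on S by differentiation: g o F = sum_m g_m * d^m F / dx^m. *)
Definition apolar (g F : poly) : poly :=
  \sum_(m <- msupp g) g@_m *: F^`M[m].

Definition perp (F : poly) : pset := fun g => apolar g F = 0.

Definition is_hideal (J : pset) : Prop :=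
  [/\ J 0,
      (forall a b, J a -> J b -> J (a + b)),
      (forall g a, J a -> J (g * a)) &
      (forall a i, J a -> J (pihomog mdeg i a))].

Definition generated_in_degree (J : pset) (e : nat) : Prop :=
  forall g, J g -> exists (r : nat) (h f : 'I_r -> poly),
    (forall j, J (f j) /\ f j \is e.-homog) /\ g = \sum_(j < r) h j * f j.

Definition colon (J I : pset) : pset := fun g => forall h, I h -> J (g * h).

Definition add_princ (J : pset) (t : poly) : pset :=
  fun g => exists a h, J a /\ g = a + h * t.

(* dim_k J_i : the largest size of a linearly independent family of
   degree-i forms lying in J (T_i is the vector space dhomog n.+1 k i). *)
Definition dim_deg (J : pset) (i : nat) : nat :=
  \max_(r < (\dim (fullv : {vspace dhomog n.+1 k i})).+1 |
        pbool (exists s : seq (dhomog n.+1 k i),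
                 [/\ size s = r, free s & forall p, p \in s -> J (val p)]))
     (val r).

(* HF(T/J, i) = dim_k T_i - dim_k J_i *)
Definition HF (J : pset) (i : nat) : nat :=
  (\dim (fullv : {vspace dhomog n.+1 k i}) - dim_deg J i)%N.

(* Homogeneous ideal I_X of a finite set of points X = {[P a] : a < N} in
   P^n, each point given by a (nonzero) representative P a in k^(n+1):
   g in I_X iff every homogeneous component of g vanishes at every point. *)
Definition ideal_points (N : nat) (P : 'I_N -> 'I_n.+1 -> k) : pset :=
  fun g => forall (i : nat) (a : 'I_N), (pihomog mdeg i g).@[P a] = 0.

End Apolarity.

From HB Require Import structures.
From mathcomp Require Import all_boot all_order all_algebra.
From mathcomp Require Import mpoly.
From mathcomp Require Import zify.
From Stdlib Require Import ClassicalEpsilon.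

(** Write [J] for [I_X : I].  In each degree [i] the evaluation map
    [T_i -> k^|X|] has its kernel inside [J_i], so [HF(T/J, i) <= |X|].
    As [t] is a nonzerodivisor modulo [J], multiplication by [t] embeds
    [(T/J)_j] into [(T/J)_(j+e)], whence
    [HF(T/(J+(t)), j+e) <= HF(T/J, j+e) - HF(T/J, j)].  Summing over [j], the
    right-hand side telescopes to at most [e] values of [HF(T/J, _)], i.e. to
    at most [e |X|].  The second inequality is monotonicity of [HF]:
    [I_X <= F^perp] gives [I_X : I <= F^perp : I]. *)

Set Implicit Arguments.
Unset Strict Implicit.
Unset Printing Implicit Defensive.
Import GRing.Theory.
Local Open Scope ring_scope.

Lemma pboolP (Q : Prop) : reflect Q (pbool Q).
Proof. by rewrite /pbool; case: excluded_middle_informative => ?; constructor. Qed.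

Lemma size_free_leq_dimvf (K : fieldType) (vT : vectType K) (X : seq vT) :
  free X -> (size X <= \dim (fullv : {vspace vT}))%N.
Proof. by move=> /eqP <-; apply/dimvS/subvf. Qed.

Lemma sum_telescope_leq (a b : nat -> nat) (e N : nat) :
  (forall i, a i <= N)%N -> (forall i, b i <= a i)%N ->
  (forall j, b (j + e) + a j <= a (j + e))%N ->
  forall s, (\sum_(i < s) b i <= e * N)%N.
Proof.
move=> aN ba bae s; rewrite -(big_mkord xpredT b).
have partial m : (\sum_(0 <= i < m) b i + \sum_(0 <= i < m - e) a i
                    <= \sum_(0 <= i < m) a i)%N.
  elim: m => [|m IH]; first by rewrite !big_geq.
  rewrite !big_nat_recr //=; case: (leqP e m) => hem.
    have -> : (m.+1 - e = (m - e).+1)%N by lia.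
    rewrite big_nat_recr //=; have := bae (m - e)%N; rewrite subnK //; lia.
  have -> : (m.+1 - e = m - e)%N by lia.
  have := ba m; lia.
have split_a : (\sum_(0 <= i < s) a i
                = \sum_(0 <= i < s - e) a i + \sum_(s - e <= i < s) a i)%N.
  by rewrite -big_cat_nat // leq_subr.
have tail_a : (\sum_(s - e <= i < s) a i <= (s - (s - e)) * N)%N.
  by rewrite -sum_nat_const_nat; apply: leq_sum => i _.
have : ((s - (s - e)) * N <= e * N)%N by apply: leq_mul => //; lia.
have := partial s; lia.
Qed.

Section DimDeg.
Variables (k : fieldType) (n : nat).
Local Notation DH i := (dhomog n.+1 k i).

Definition is_subspace (J : pset k n) :=
  [/\ J 0, forall a b, J a -> J b -> J (a + b)
         & forall (c : k) a, J a -> J (c *: a)].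

Lemma subspace_span (J : pset k n) i (X : seq (DH i)) v :
  is_subspace J -> (forall x, x \in X -> J (val x)) ->
  (v \in <<X>>)%VS -> J (val v).
Proof.
case=> J0 JD JZ; elim: X v => [|x X IH] v JX.
  by rewrite span_nil memv0 => /eqP ->.
rewrite span_cons => /memv_addP [u /vlineP [c ->]] [w Xw ->].
rewrite raddfD /=; apply: JD; first by apply/JZ/JX; rewrite inE eqxx.
by apply: IH => // y Xy; apply: JX; rewrite inE Xy orbT.
Qed.

Lemma dim_deg_geq_free (J : pset k n) i (X : seq (DH i)) :
  free X -> (forall x, x \in X -> J (val x)) -> (size X <= dim_deg J i)%N.
Proof.
move=> fX JX; have sX : (size X < (\dim (fullv : {vspace DH i})).+1)%N.
  by rewrite ltnS size_free_leq_dimvf.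
apply: leq_trans (leq_bigmax_cond (Ordinal sX) _) => //.
by apply/pboolP; exists X.
Qed.

Lemma dim_degP (J : pset k n) i : exists X : seq (DH i),
  [/\ size X = dim_deg J i, free X & forall x, x \in X -> J (val x)].
Proof.
rewrite /dim_deg; set A := fun r : 'I_(\dim (fullv : {vspace DH i})).+1 =>
  pbool (exists X : seq (DH i),
           [/\ size X = r, free X & forall p, p \in X -> J (val p)]).
have A0 : (0 < #|A|)%N.
  apply/card_gt0P; exists ord0; apply/pboolP.
  by exists [::]; split => //; apply: nil_free.
have [r /pboolP [X [sX fX JX]] ->] := eq_bigmax_cond (fun r => val r) A0.
by exists X.
Qed.

Lemma dim_deg_leq_dimvf (J : pset k n) i :
  (dim_deg J i <= \dim (fullv : {vspace DH i}))%N.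
Proof. by have [X [<- fX _]] := dim_degP J i; apply: size_free_leq_dimvf. Qed.

Lemma dim_deg_span (J : pset k n) i (X : seq (DH i)) :
  free X -> (forall x, x \in X -> J (val x)) -> size X = dim_deg J i ->
  forall v, J (val v) -> (v \in <<X>>)%VS.
Proof.
move=> fX JX sX v Jv; apply/negPn/negP => Xv.
have : (size (v :: X) <= dim_deg J i)%N.
  apply: dim_deg_geq_free; first by rewrite free_cons Xv fX.
  by move=> x; rewrite inE => /orP [/eqP ->|/JX].
by rewrite /= sX ltnn.
Qed.

Lemma dim_degS (J J' : pset k n) i :
  (forall p : DH i, J (val p) -> J' (val p)) ->
  (dim_deg J i <= dim_deg J' i)%N.
Proof.
move=> JJ'; have [X [<- fX JX]] := dim_degP J i.
by apply: dim_deg_geq_free => // x /JX /JJ'.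
Qed.

Lemma HFS (J J' : pset k n) i :
  (forall p : DH i, J (val p) -> J' (val p)) -> (HF J' i <= HF J i)%N.
Proof. by move=> JJ'; rewrite /HF leq_sub2l // dim_degS. Qed.

Lemma HF_add_princ_leq (J : pset k n) t i : (HF (add_princ J t) i <= HF J i)%N.
Proof. by apply: HFS => p Jp; exists (val p), 0; rewrite mul0r addr0. Qed.

Lemma colon_subspace (J I : pset k n) : is_subspace J -> is_subspace (colon J I).
Proof.
case=> J0 JD JZ; split.
- by move=> h _; rewrite mul0r.
- by move=> a b Ja Jb h Ih; rewrite mulrDl; apply: JD; [apply: Ja | apply: Jb].
- by move=> c a Ja h Ih; rewrite -scalerAl; apply/JZ/Ja.
Qed.

End DimDeg.

Section NonZeroDivisor.
Variables (k : fieldType) (n : nat).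
Local Notation poly := {mpoly k[n.+1]}.
Local Notation DH i := (dhomog n.+1 k i).
Variables (e : nat) (t : poly) (hte : t \is e.-homog).

Section MulHomog.
Variable j : nat.

Definition mul_homog (p : DH j) : DH (j + e) :=
  DHomog (dhomogM (dhomog_is_dhomog p) hte).

Lemma mul_homog_is_linear : linear mul_homog.
Proof. by move=> c p q; apply: val_inj; rewrite /= mulrDl scalerAl. Qed.

HB.instance Definition _ :=
  GRing.isLinear.Build k (DH j) (DH (j + e)) _ mul_homog mul_homog_is_linear.

End MulHomog.

Variables (J : pset k n) (hJ : is_subspace J) (nzd_t : forall g, J (g * t) -> J g).

(* A basis of [J_(j+e)] together with [t] times a basis of a complement of
   [J_j] in [T_j] is free and lies in [(J + (t))_(j+e)]. *)
Lemma HF_add_princ_nzd j : (HF (add_princ J t) (j + e) + HF J j <= HF J (j + e))%N.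
Proof.
have J0 : J 0 by case: hJ.
have [X1 [sX1 fX1 JX1]] := dim_degP J (j + e).
have [X0 [sX0 fX0 JX0]] := dim_degP J j.
have /andP [/eqP spanY fY] := vbasisP (<<X0>>^C)%VS.
set Y := vbasis _ in spanY fY.
pose mt := linfun (@mul_homog j).
have mtE v : val (mt v) = val v * t by rewrite lfunE.
have mt_notin v : (v \in <<Y>>)%VS -> J (val v * t) -> v = 0.
  move=> Yv /nzd_t Jv; apply/eqP; rewrite -memv0 -(capv_compl <<X0>>) memv_cap.
  by rewrite -spanY Yv (dim_deg_span fX0 JX0 sX0 Jv).
have f_mtY : free (map mt Y).
  rewrite /free -limg_span limg_dim_eq ?size_map; first exact: fY.
  apply/eqP; rewrite -subv0; apply/subvP => v /memv_capP [Yv].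
  by rewrite memv_ker memv0 => /eqP mtv0; rewrite (mt_notin v Yv) // -mtE mtv0.
have f_all : free (X1 ++ map mt Y).
  rewrite cat_free fX1 f_mtY /=; apply/directv_addP/eqP.
  rewrite -subv0; apply/subvP => w /memv_capP [X1w].
  rewrite -limg_span => /memv_imgP [v Yv wE]; rewrite memv0 wE.
  have := subspace_span hJ JX1 X1w; rewrite wE mtE => Jmtv.
  by rewrite (mt_notin v Yv Jmtv) linear0.
have J_all x : x \in X1 ++ map mt Y -> add_princ J t (val x).
  rewrite mem_cat => /orP [/JX1 Jx | /mapP [v _ ->]].
    by exists (val x), 0; rewrite mul0r addr0.
  by exists 0, (val v); rewrite add0r mtE.
have := dim_deg_geq_free f_all J_all.
rewrite size_cat size_map sX1 size_tuple dimv_compl (eqP fX0) sX0.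
have := size_free_leq_dimvf fX0; rewrite sX0.
have := dim_deg_leq_dimvf (add_princ J t) (j + e).
rewrite /HF; move: (\dim _) (\dim _) => D0 D1; lia.
Qed.

End NonZeroDivisor.

Section Points.
Variables (k : fieldType) (n : nat).
Local Notation poly := {mpoly k[n.+1]}.
Local Notation DH i := (dhomog n.+1 k i).
Variables (N : nat) (P : 'I_N -> 'I_n.+1 -> k).

Lemma ideal_points_subspace : is_subspace (ideal_points P).
Proof.
split.
- by move=> i a; rewrite pihomog0 meval0.
- by move=> a b Ja Jb i c; rewrite pihomogD mevalD Ja Jb addr0.
- by move=> c a Ja i b; rewrite linearZ /= mevalZ Ja mulr0.
Qed.

Lemma ideal_points_homog d (q : poly) :
  q \is d.-homog -> (forall a, q.@[P a] = 0) -> ideal_points P q.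
Proof.
move=> dq q0 i a; case: (eqVneq d i) => [<- | ne]; first by rewrite pihomog_dE.
by rewrite (pihomog_ne0 ne dq) meval0.
Qed.

Lemma ideal_points_mul_homog d (q : poly) :
  q \is d.-homog -> (forall a, q.@[P a] = 0) ->
  forall h, ideal_points P (q * h).
Proof.
move=> dq q0 h; have [J0 JD _] := ideal_points_subspace.
rewrite (pihomog_partitionE (leqnn (mmeasure mdeg h))) mulr_sumr.
apply: (big_ind (ideal_points P)) => // i _.
apply: (@ideal_points_homog (d + i)); first exact/dhomogM/pihomogP.
by move=> a; rewrite mevalM q0 mul0r.
Qed.

Section Evaluation.
Variable i : nat.

Definition eval_points (p : DH i) : 'rV[k]_N := \row_a (val p).@[P a].

Lemma eval_points_is_linear : linear eval_points.
Proof. by move=> c p q; apply/rowP => a; rewrite !mxE /= mevalD mevalZ. Qed.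

HB.instance Definition _ :=
  GRing.isLinear.Build k (DH i) 'rV[k]_N _ eval_points eval_points_is_linear.

End Evaluation.

Lemma HF_leq_npoints (J : pset k n) i :
  (forall q : poly, q \is i.-homog -> (forall a, q.@[P a] = 0) -> J q) ->
  (HF J i <= N)%N.
Proof.
move=> Jvanish; pose ev := linfun (@eval_points i).
have /andP [/eqP spanB fB] := vbasisP (lker ev).
have JB x : x \in (vbasis (lker ev) : seq _) -> J (val x).
  move=> /memv_span; rewrite spanB memv_ker lfunE /= => /eqP /rowP ev0.
  by apply: Jvanish => [|a]; [apply: dhomog_is_dhomog | have := ev0 a; rewrite !mxE].
have := dim_deg_geq_free fB JB; rewrite size_tuple.
have := limg_ker_dim ev fullv; rewrite capfv.
have : (\dim (ev @: fullv) <= N)%N.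
  by apply: leq_trans (dimvS (subvf _)) _; rewrite dimvf dim_matrix; lia.
rewrite /HF => ? <- ?; lia.
Qed.

End Points.

Theorem theorem3p3
  (k : closedFieldType) (hchar : [pchar k] =i pred0)
  (n : nat) (hn : (0 < n)%N)
  (d : nat) (F : {mpoly k[n.+1]}) (hF : F \is d.-homog)
  (N : nat) (P : 'I_N -> 'I_n.+1 -> k)
  (hPnz : forall a, exists j, P a j != 0)
  (hPdist : forall a b, a != b -> ~ (exists c : k, forall j, P a j = c * P b j))
  (hXF : forall g, ideal_points P g -> perp F g)
  (I : pset k n) (e : nat) (he : (0 < e)%N)
  (hI : is_hideal I) (hgen : generated_in_degree I e)
  (t : {mpoly k[n.+1]}) (ht : I t) (hte : t \is e.-homog)
  (hnzd : forall g, colon (ideal_points P) I (g * t) ->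
                    colon (ideal_points P) I g) :
  exists s0 : nat, forall s : nat, (s0 <= s)%N ->
    (\sum_(i < s.+1) HF (add_princ (colon (ideal_points P) I) t) i <= e * N)%N /\
    (\sum_(i < s.+1) HF (add_princ (colon (perp F) I) t) i
       <= \sum_(i < s.+1) HF (add_princ (colon (ideal_points P) I) t) i)%N.
Proof.
(* Both bounds hold for every [s]. *)
exists 0%N => s _; set J := colon (ideal_points P) I.
have J_subspace : is_subspace J by apply/colon_subspace/ideal_points_subspace.
split.
- apply: (sum_telescope_leq (a := HF J) (b := HF (add_princ J t))).
  + move=> i; apply: (@HF_leq_npoints _ _ _ P) => q iq q0 h _.
    exact: ideal_points_mul_homog iq q0 h.
  + exact: HF_add_princ_leq.
  + exact: (HF_add_princ_nzd hte J_subspace hnzd).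
- apply: leq_sum => i _; apply: HFS => p [a [h [Ja ->]]].
  by exists a, h; split => // g Ig; apply/hXF/Ja.
Qed.
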